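(* Let $p$ be a prime, $a\ge 1$ an integer, and $n=p^a$. With $L$ and $R$ the matrices indexed by $P(n)$ defined in the context, \[\dim\ker (pR+L)\ge a.\]
   Context: Let $\phi$ denote Euler's totient function. For a positive integer $n$ let $P(n)=\{(i,j): j\mid n,\ i\mid j\}$. Define square matrices $L$ and $R$ with rows and columns indexed by $P(n)$ as follows. For a row index $(i,j)$ and a column index $(d,c)$: $L_{(i,j)}^{(d,c)} = \phi(d)\,\frac{n}{\operatorname{lcm}(j,c)}$ if $d\mid i$ and $j\mid \operatorname{lcm}(i,c)$, and $0$ otherwise. For the row $(i,j)$, let $v$ be the largest divisor of $i$ coprime with $j/i$ and put $u=i/v$. Then $R_{(i,j)}^{(e,c)} = u\,\phi(ev/j)\,\frac{n}{\operatorname{lcm}(j,c)}$ if $(j/v)\mid e$, $e\mid j$ and $j\mid\operatorname{lcm}(i,c)$, and $0$ otherwise. Here $\ker(pR+L)$ may be taken as the left kernel (space of row vectors $w$ with $w(pR+L)=0$); its dimension equals that of the right kernel. *)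

From mathcomp Require Import all_boot all_algebra.
Set Implicit Arguments. Unset Strict Implicit. Unset Printing Implicit Defensive.
Import GRing.Theory.
Local Open Scope ring_scope.

(* Matrices indexed by P(n) are 'M_(size (Pidx n)), the k-th index
   corresponding to the pair nth (0,0) (Pidx n) k. *)
Definition Pidx (n : nat) : seq (nat * nat) :=
  [seq (i, j) | j <- divisors n, i <- divisors j].

Definition Lentry (n : nat) (r s : nat * nat) : rat :=
  let: (i, j) := r in let: (d, c) := s in
  if ((d %| i) && (j %| lcmn i c))%N then ((totient d * (n %/ lcmn j c))%N)%:R else 0.

Definition vpart (i j : nat) : nat :=
  (\max_(d <- divisors i | coprime d (j %/ i)) d)%N.

Definition Rentry (n : nat) (r s : nat * nat) : rat :=
  let: (i, j) := r in let: (e, c) := s in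
  let v := vpart i j in let u := (i %/ v)%N in
  if [&& ((j %/ v) %| e)%N, (e %| j)%N & (j %| lcmn i c)%N]
  then ((u * totient ((e * v) %/ j)%N * (n %/ lcmn j c))%N)%:R else 0.

Definition Lmx (n : nat) : 'M[rat]_(size (Pidx n)) :=
  \matrix_(r, s) Lentry n (nth (0, 0)%N (Pidx n) r) (nth (0, 0)%N (Pidx n) s).

Definition Rmx (n : nat) : 'M[rat]_(size (Pidx n)) :=
  \matrix_(r, s) Rentry n (nth (0, 0)%N (Pidx n) r) (nth (0, 0)%N (Pidx n) s).

From mathcomp Require Import all_boot all_algebra.
From mathcomp Require Import zify ring.
Set Implicit Arguments. Unset Strict Implicit. Unset Printing Implicit Defensive.
Import GRing.Theory Num.Theory.
Local Open Scope ring_scope.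

(* For 0 <= m < a the row vector
     w_m = p e_(p^(m+1), p^(m+1)) - (p^2 - 1) e_(p^m, p^(m+1)) - e_(p^m, p^m)
   lies in the left kernel of pR + L: for n = p^a every entry of L and R is an
   explicit power of p, and the relation reduces to [phi(p^(m+1)) = (p-1) p^m].
   The w_m are independent because w_i has coordinate -(p^2 - 1) [i = j] at the
   off-diagonal index (p^j, p^(j+1)). *)

Lemma rank_kermx_row_free (F : fieldType) m n k (A : 'M[F]_(m, n)) (W : 'M_(k, m)) :
  row_free W -> W *m A = 0 -> (k <= \rank (kermx A))%N.
Proof. by move=> /eqP W_rank /sub_kermxP /mxrankS; rewrite W_rank. Qed.

Lemma row_free_mul_scalar (F : fieldType) m k (W : 'M[F]_(k, m)) (S : 'M_(m, k)) c :
  c != 0 -> W *m S = c%:M -> row_free W.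
Proof.
move=> c_neq0 WS; apply/row_freeP; exists (c^-1 *: S).
by rewrite -scalemxAr WS scale_scalar_mx mulVf.
Qed.

Section DeltaRow.
Variables (R : pzRingType) (T : eqType) (x0 : T) (s : seq T).

Definition delta_row (b : T) : 'rV[R]_(size s) := \row_r (nth x0 s r == b)%:R.

Lemma delta_row_mul k (F : T -> 'I_k -> R) b : uniq s -> b \in s ->
  delta_row b *m \matrix_(r, c) F (nth x0 s r) c = \row_c F b c.
Proof.
move=> s_uniq b_s; apply/rowP => c; rewrite !mxE.
under eq_bigr do rewrite !mxE.
rewrite -(big_mkord xpredT (fun r => (nth x0 s r == b)%:R * F (nth x0 s r) c)).
rewrite -(big_nth x0 xpredT (fun y => (y == b)%:R * F y c)).
rewrite (big_rem b) //= eqxx mul1r big1_seq ?addr0 // => y /andP[_ y_rem].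
suff /negbTE -> : y != b by rewrite mul0r.
by apply: contraTneq y_rem => ->; rewrite mem_rem_uniqF.
Qed.

End DeltaRow.

Arguments delta_row {R T} x0 s b.
Arguments delta_row_mul {R T x0 s k} F b.

Lemma Pidx_uniq n : uniq (Pidx n).
Proof.
apply: allpairs_uniq_dep => [||[j i] [j' i'] _ _ /= [-> ->]] //.
  exact: divisors_uniq.
by move=> j _; apply: divisors_uniq.
Qed.

Lemma mem_Pidx n i j : (0 < n)%N ->
  ((i, j) \in Pidx n) = (j %| n)%N && (i %| j)%N.
Proof.
move=> n_gt0; apply/allpairsPdep/andP => [[j' [i' [j'_n i'_j' [-> ->]]]] | [j_n i_j]].
  move: j'_n; rewrite -dvdn_divisors // => j'_n.
  by move: i'_j'; rewrite -dvdn_divisors ?(dvdn_gt0 n_gt0).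
by exists j, i; rewrite -!dvdn_divisors ?(dvdn_gt0 n_gt0).
Qed.

Definition pdiag p m := (p ^ m, p ^ m)%N.
Definition pstep p m := (p ^ m, p ^ m.+1)%N.

Definition pRLentry p a x y : rat :=
  p%:R * Rentry (p ^ a) x y + Lentry (p ^ a) x y.

Lemma scale_Rmx_add_Lmx p a : p%:R *: Rmx (p ^ a) + Lmx (p ^ a) =
  \matrix_(r, c) pRLentry p a (nth (0, 0)%N (Pidx (p ^ a)) r)
                             (nth (0, 0)%N (Pidx (p ^ a)) c).
Proof. by apply/matrixP => r c; rewrite !mxE. Qed.

Definition kervec p a m : 'rV[rat]_(size (Pidx (p ^ a))) :=
  let delta := delta_row (0, 0)%N (Pidx (p ^ a)) in
  p%:R *: delta (pdiag p m.+1) - (p%:R ^+ 2 - 1) *: delta (pstep p m)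
  - delta (pdiag p m).

Definition pstep_sel p a : 'M[rat]_(size (Pidx (p ^ a)), a) :=
  \matrix_(r, j) (nth (0, 0)%N (Pidx (p ^ a)) r == pstep p j)%:R.

Section PrimePower.
Variables (p : nat) (p_prime : prime p).
Let p_gt1 : (1 < p)%N := prime_gt1 p_prime.
Let p_gt0 : (0 < p)%N := prime_gt0 p_prime.

Lemma mem_Pidx_pexp a d g :
  ((p ^ d, p ^ g)%N \in Pidx (p ^ a)) = (d <= g <= a)%N.
Proof. by rewrite mem_Pidx ?expn_gt0 ?p_gt0 // !dvdn_Pexp2l // andbC. Qed.

Lemma Pidx_pexpP a z : z \in Pidx (p ^ a) ->
  exists d g, [/\ (d <= g <= a)%N & z = (p ^ d, p ^ g)%N].
Proof.
case: z => i j; rewrite mem_Pidx ?expn_gt0 ?p_gt0 // => /andP[].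
case/(dvdn_pfactor _ _ p_prime) => g g_a -> /(dvdn_pfactor _ _ p_prime) [d d_g ->].
by exists d, g; rewrite d_g g_a.
Qed.

Lemma vpart_id i : (0 < i)%N -> vpart i i = i.
Proof.
move=> i_gt0; rewrite /vpart divnn i_gt0; apply/eqP; rewrite eqn_leq.
apply/andP; split.
  by apply/bigmax_leqP_seq => d; rewrite -dvdn_divisors // => /dvdn_leq->.
by apply: (leq_bigmax_seq (F := id)); rewrite ?divisors_id ?coprimen1.
Qed.

Lemma vpart_pstep m : vpart (p ^ m) (p ^ m.+1) = 1%N.
Proof.
rewrite /vpart expnS mulnK ?expn_gt0 ?p_gt0 //; apply/eqP; rewrite eqn_leq.
apply/andP; split; last first.
  by apply: (leq_bigmax_seq (F := id)); rewrite ?divisor1 ?coprime1n.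
apply/bigmax_leqP_seq => d; rewrite -dvdn_divisors ?expn_gt0 ?p_gt0 //.
case/(dvdn_pfactor _ _ p_prime) => [[|k]] _ ->; first by rewrite expn0.
by rewrite coprime_pexpl // /coprime gcdnn eqn_leq leqNgt p_gt1.
Qed.

Section Entries.
Variables (a d g : nat) (g_le_a : (g <= a)%N).
Local Notation col := (p ^ d, p ^ g)%N.
Local Notation colw m := ((totient (p ^ d) * p ^ (a - maxn m g))%N%:R : rat).

Lemma Lentry_pdiag m : (m <= a)%N ->
  Lentry (p ^ a) (pdiag p m) col = if (d <= m)%N then colw m else 0.
Proof.
move=> m_le_a; rewrite /Lentry /pdiag -!expn_max !dvdn_Pexp2l // leq_maxl andbT.
by rewrite -expnB ?expn_gt0 ?p_gt0 // geq_max m_le_a.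
Qed.

Lemma Rentry_pdiag m : (m <= a)%N ->
  Rentry (p ^ a) (pdiag p m) col = if (d <= m)%N then colw m else 0.
Proof.
move=> m_le_a; rewrite /Rentry /pdiag vpart_id ?expn_gt0 ?p_gt0 // divnn expn_gt0 p_gt0.
rewrite dvd1n -!expn_max !dvdn_Pexp2l // leq_maxl andbT mulnK ?expn_gt0 ?p_gt0 //.
by rewrite mul1n -expnB ?expn_gt0 ?p_gt0 // geq_max m_le_a.
Qed.

Lemma Lentry_pstep m : (m < a)%N ->
  Lentry (p ^ a) (pstep p m) col =
  if (d <= m < g)%N then colw m.+1 else 0.
Proof.
move=> m_lt_a; rewrite /Lentry /pstep -!expn_max !dvdn_Pexp2l // leq_max ltnn.
by rewrite -expnB ?expn_gt0 ?p_gt0 // geq_max m_lt_a.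
Qed.

Lemma Rentry_pstep m : (m < a)%N ->
  Rentry (p ^ a) (pstep p m) col =
  if (d == m.+1) && (m < g)%N then (p ^ m * p ^ (a - maxn m.+1 g))%N%:R else 0.
Proof.
move=> m_lt_a; rewrite /Rentry /pstep vpart_pstep !divn1 muln1.
rewrite -!expn_max !dvdn_Pexp2l // leq_max ltnn /= andbA.
rewrite (_ : (m < d <= m.+1)%N = (d == m.+1)); last by lia.
case: eqP => //= ->.
by rewrite divnn expn_gt0 p_gt0 muln1 -expnB // geq_max m_lt_a.
Qed.

End Entries.

Lemma pRLentry_relation a m d g : (m < a)%N -> (d <= g <= a)%N ->
  p%:R * pRLentry p a (pdiag p m.+1) (p ^ d, p ^ g)%N
  - (p%:R ^+ 2 - 1) * pRLentry p a (pstep p m) (p ^ d, p ^ g)%N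
  - pRLentry p a (pdiag p m) (p ^ d, p ^ g)%N = 0.
Proof.
move=> m_lt_a /andP[d_le_g g_le_a]; rewrite /pRLentry.
rewrite Rentry_pdiag ?Lentry_pdiag ?Rentry_pstep ?Lentry_pstep ?Rentry_pdiag ?Lentry_pdiag //;
  try lia.
have [g_le_m | m_lt_g] := leqP g m.
  have d_le_m : (d <= m)%N by lia.
  rewrite d_le_m leqW // !andbF (maxn_idPl (leqW g_le_m)).
  have -> : (a - m = (a - m.+1).+1)%N by lia.
  by rewrite expnS !natrM !natrX; ring.
rewrite !andbT (maxn_idPr m_lt_g).
have [d_le_m | m_lt_d] := leqP d m.
  by rewrite leqW // (_ : (d == m.+1) = false); [ring | lia].
case: (ltngtP d m.+1) => [d_lt | d_gt | ->]; first by lia.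
  by ring.
rewrite totient_pfactor //= !natrM !natrX -subn1 natrB //; ring.
Qed.

Lemma pdiag_eq_pstep x y : (pdiag p x == pstep p y) = false.
Proof.
by rewrite /pdiag /pstep xpair_eqE !eqn_exp2l //; case: eqP => // ->; rewrite ltn_eqF.
Qed.

Lemma pstep_eq x y : (pstep p x == pstep p y) = (x == y).
Proof. by rewrite /pstep xpair_eqE !eqn_exp2l // eqSS andbb. Qed.

Lemma kervec_mul_pstep_sel a m : (m < a)%N ->
  kervec p a m *m pstep_sel p a = \row_j ((1 - p%:R ^+ 2) *+ (m == j)).
Proof.
move=> m_lt_a; rewrite /pstep_sel /kervec !mulmxBl -!scalemxAl.
rewrite !(delta_row_mul (fun y (j : 'I_a) => (y == pstep p j)%:R))
  ?Pidx_uniq ?mem_Pidx_pexp ?leqnSn //; try lia.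
apply/rowP => j; rewrite !mxE !pdiag_eq_pstep pstep_eq.
by rewrite mulr0 subr0 sub0r mulr_natr -mulNrn opprB.
Qed.

Lemma kervec_mul_pRL a m : (m < a)%N ->
  kervec p a m *m (p%:R *: Rmx (p ^ a) + Lmx (p ^ a)) = 0.
Proof.
move=> m_lt_a; rewrite scale_Rmx_add_Lmx /kervec !mulmxBl -!scalemxAl.
set s := Pidx (p ^ a).
rewrite !(delta_row_mul (fun y (c : 'I_(size s)) => pRLentry p a y (nth (0, 0)%N s c)))
  ?Pidx_uniq ?mem_Pidx_pexp ?leqnSn //; try lia.
apply/rowP => c; rewrite !mxE.
have [d [g [dga ->]]] := Pidx_pexpP (mem_nth (0, 0)%N (ltn_ord c)).
exact: pRLentry_relation.
Qed.

End PrimePower.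

Theorem proposition5p2 (p a : nat) (hp : prime p) (ha : (1 <= a)%N) :
  (a <= \rank (kermx ((p%:R : rat) *: Rmx (p ^ a) + Lmx (p ^ a))))%N.
Proof.
pose W := \matrix_(i < a) kervec p a i.
apply: (@rank_kermx_row_free _ _ _ _ _ W).
  apply: (@row_free_mul_scalar _ _ _ W (pstep_sel p a) (1 - p%:R ^+ 2)).
    by rewrite subr_eq0 eq_sym -natrX pnatr_eq1 -(expn0 p) eqn_exp2l ?prime_gt1.
  apply/row_matrixP => i; rewrite row_mul rowK kervec_mul_pstep_sel //.
  by apply/rowP => j; rewrite !mxE.
by apply/row_matrixP => i; rewrite row_mul rowK kervec_mul_pRL // row0.
Qed.
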